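(* Let $a\ge b\ge1$ be integers with either $b\ge2$, or $b=1$ and $a\ge5$, and define $c_j,d_j$ ($j\in\mathbb Z_+$) by $c_0=d_0=0$, $c_1=d_1=1$, $c_{k+2}+c_k=a d_{k+1}$, $d_{k+2}+d_k=b c_{k+1}$. Then for all $k\ge0$: $$bc_{k+1}^2+ad_k^2-abc_{k+1}d_k+abc_{k+1}-2ad_k+a>0,$$ $$bc_k^2+ad_{k+1}^2-abc_kd_{k+1}-2bc_k+abd_{k+1}+b>0.$$
   Context: $\mathbb Z_+=\{0,1,2,\dots\}$. *)

From Stdlib Require Import ZArith.
Open Scope Z_scope.

(* cd a b n = (c_n, c_{n+1}, d_n, d_{n+1}) where
   c_0=d_0=0, c_1=d_1=1, c_{k+2} = a d_{k+1} - c_k, d_{k+2} = b c_{k+1} - d_k. *)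
Fixpoint cd4 (a b : Z) (n : nat) : Z * Z * Z * Z :=
  match n with
  | O => (0, 1, 0, 1)
  | S m => let '(c0, c1, d0, d1) := cd4 a b m in
           (c1, a * d1 - c0, d1, b * c1 - d0)
  end.

Definition cseq (a b : Z) (n : nat) : Z := let '(c, _, _, _) := cd4 a b n in c.
Definition dseq (a b : Z) (n : nat) : Z := let '(_, _, d, _) := cd4 a b n in d.

Lemma cseq_rec a b k : cseq a b (S (S k)) + cseq a b k = a * dseq a b (S k).
Proof. unfold cseq, dseq; simpl; destruct (cd4 a b k) as [[[c0 c1] d0] d1]; simpl; ring. Qed.
Lemma dseq_rec a b k : dseq a b (S (S k)) + dseq a b k = b * cseq a b (S k).
Proof. unfold cseq, dseq; simpl; destruct (cd4 a b k) as [[[c0 c1] d0] d1]; simpl; ring. Qed.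
Lemma cseq_init a b : cseq a b 0 = 0 /\ cseq a b 1 = 1 /\ dseq a b 0 = 0 /\ dseq a b 1 = 1.
Proof. repeat split. Qed.

From Stdlib Require Import ZArith Lia.
Open Scope Z_scope.

(* Both sequences are governed by one pair (e_m, f_m): c_{2m} = a e_m,
   d_{2m} = b e_m and c_{2m+1} = d_{2m+1} = f_m, where, with t = ab,
   (e, f) -> (f - e, t (f - e) - f).  This step preserves the binary form
   f^2 - t e f + t e^2, which equals 1 at (0, 1), and for t >= 4 it
   preserves 0 <= e and 2 e <= f.  Each of the four expressions of the
   theorem is a positive multiple of that form plus a multiple of f - 2 e
   (even k) or of t (f - e) - 2 f + 1 >= 1 (odd k), hence positive. *)

Definition form1 (a b c d : Z) : Z :=
  b * c ^ 2 + a * d ^ 2 - a * b * c * d + a * b * c - 2 * a * d + a.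

Definition form2 (a b c d : Z) : Z :=
  b * c ^ 2 + a * d ^ 2 - a * b * c * d - 2 * b * c + a * b * d + b.

Definition pell_form (t e f : Z) : Z := f ^ 2 - t * e * f + t * e ^ 2.

Fixpoint ef (t : Z) (m : nat) : Z * Z :=
  match m with
  | O => (0, 1)
  | S m => let '(e, f) := ef t m in (f - e, t * (f - e) - f)
  end.

Lemma cd4_double (a b : Z) (m : nat) :
  cd4 a b (2 * m) =
  (a * fst (ef (a * b) m), snd (ef (a * b) m),
   b * fst (ef (a * b) m), snd (ef (a * b) m)).
Proof.
  induction m as [|m IH]; [cbn; now rewrite !Z.mul_0_r|].
  replace (2 * S m)%nat with (S (S (2 * m))) by lia.
  cbn [cd4 ef]; rewrite IH.
  destruct (ef (a * b) m) as [e f]; cbn.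
  f_equal; [f_equal; [f_equal|]|]; ring.
Qed.

Lemma pell_form_ef (t : Z) (m : nat) :
  pell_form t (fst (ef t m)) (snd (ef t m)) = 1.
Proof.
  induction m as [|m IH]; [cbn; unfold pell_form; ring|].
  cbn [ef]; destruct (ef t m) as [e f]; cbn [fst snd] in *.
  rewrite <- IH; unfold pell_form; ring.
Qed.

Lemma ef_growth (t : Z) (m : nat) :
  4 <= t -> 0 <= fst (ef t m) /\ 2 * fst (ef t m) <= snd (ef t m).
Proof.
  intros Ht; induction m as [|m IH]; cbn [ef]; [cbn; lia|].
  destruct (ef t m) as [e f]; cbn [fst snd] in *; destruct IH as [He Hef].
  assert (Hfe : 4 * (f - e) <= t * (f - e)) by nia.
  lia.
Qed.

Lemma forms_pos_even_pair (a b e f : Z) :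
  1 <= a -> 1 <= b -> pell_form (a * b) e f = 1 -> 2 * e <= f ->
  form1 a b f (b * e) > 0 /\ form2 a b (a * e) f > 0.
Proof.
  intros Ha Hb Hpell Hef.
  assert (H1 : form1 a b f (b * e) = b * pell_form (a * b) e f + a * b * (f - 2 * e) + a)
    by (unfold form1, pell_form; ring).
  assert (H2 : form2 a b (a * e) f = a * pell_form (a * b) e f + a * b * (f - 2 * e) + b)
    by (unfold form2, pell_form; ring).
  assert (Hgap : 0 <= a * b * (f - 2 * e)) by (apply Z.mul_nonneg_nonneg; lia).
  rewrite H1, H2, Hpell; lia.
Qed.

Lemma forms_pos_odd_pair (a b e f : Z) :
  1 <= a -> 1 <= b -> 4 <= a * b -> pell_form (a * b) e f = 1 ->
  0 <= e -> 2 * e <= f ->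
  form1 a b (a * (f - e)) f > 0 /\ form2 a b f (b * (f - e)) > 0.
Proof.
  intros Ha Hb Ht Hpell He Hef.
  assert (Hgap : 1 <= a * b * (f - e) - 2 * f + 1) by nia.
  assert (H1 : form1 a b (a * (f - e)) f
               = a * pell_form (a * b) e f + a * (a * b * (f - e) - 2 * f + 1))
    by (unfold form1, pell_form; ring).
  assert (H2 : form2 a b f (b * (f - e))
               = b * pell_form (a * b) e f + b * (a * b * (f - e) - 2 * f + 1))
    by (unfold form2, pell_form; ring).
  rewrite H1, H2, Hpell; nia.
Qed.

Lemma forms_pos (a b : Z) (k : nat) :
  1 <= a -> 1 <= b -> 4 <= a * b ->
  form1 a b (cseq a b (S k)) (dseq a b k) > 0 /\
  form2 a b (cseq a b k) (dseq a b (S k)) > 0.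
Proof.
  intros Ha Hb Ht.
  destruct (Nat.Even_or_Odd k) as [[m ->]|[m ->]].
  - pose proof (pell_form_ef (a * b) m) as Hpell.
    pose proof (ef_growth (a * b) m Ht) as [He Hef].
    unfold cseq, dseq; cbn [cd4]; rewrite cd4_double.
    destruct (ef (a * b) m) as [e f]; cbn [fst snd] in *.
    now apply forms_pos_even_pair.
  - pose proof (pell_form_ef (a * b) m) as Hpell.
    pose proof (ef_growth (a * b) m Ht) as [He Hef].
    replace (S (2 * m + 1)) with (2 * S m)%nat by lia.
    rewrite Nat.add_1_r.
    unfold cseq, dseq; cbn [cd4]; rewrite !cd4_double; cbn [ef].
    destruct (ef (a * b) m) as [e f]; cbn [fst snd] in *.
    now apply forms_pos_odd_pair.
Qed.

Theorem lemma3p6 (a b : Z) :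
  a >= b -> b >= 1 -> (b >= 2 \/ (b = 1 /\ a >= 5)) ->
  forall k : nat,
    b * cseq a b (S k) ^ 2 + a * dseq a b k ^ 2
      - a * b * cseq a b (S k) * dseq a b k + a * b * cseq a b (S k)
      - 2 * a * dseq a b k + a > 0 /\
    b * cseq a b k ^ 2 + a * dseq a b (S k) ^ 2
      - a * b * cseq a b k * dseq a b (S k) - 2 * b * cseq a b k
      + a * b * dseq a b (S k) + b > 0.
Proof.
  intros Hab Hb Hcases k.
  assert (Ht : 4 <= a * b) by (destruct Hcases as [? | [-> ?]]; nia).
  exact (forms_pos a b k ltac:(lia) ltac:(lia) Ht).
Qed.
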